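(* Let $G$ be a DCG containing a cycle $C=(v_1,\dots,v_k)$ of distinct vertices, $k\ge 2$ (edges $v_i\to v_{i+1}$, indices mod $k$). Let $H=\textsc{Reverse}(G,C)$. Then $H$ is Markov equivalent to $G$.
   Context: A DCG is a directed graph without self-loops (cycles and 2-cycles allowed). $\mathrm{Pa}_G(v)$ is the set of $u$ with $u\to v$ in $G$. $\textsc{Reverse}(G,C)$ is the DCG on the same vertex set with edge set $$\{v_{i+1}\to v_i : 1\le i\le k\}\ \cup\ \{a\to b\in E(G): b\notin C\}\ \cup\ \{w\to v_{i-1} : 1\le i\le k,\ w\in \mathrm{Pa}_G(v_i)\setminus\{v_{i-1}\}\},$$ i.e. the cycle is reversed, and each other incoming edge $w\to v_i$ of a cycle vertex is replaced by $w\to v_{i-1}$ (indices mod $k$); edges into vertices outside $C$ are kept. d-separation: a path between $a\neq b$ is a sequence of vertices (repeats allowed) with a specified directed edge (either direction) between consecutive vertices; an internal vertex is a collider if both adjacent path-edges point into it; $x$ is a descendant of $v$ if $x=v$ or there is a directed path from $v$ to $x$; the path is active given $Z\subseteq V\setminus\{a,b\}$ if every internal non-collider is outside $Z$ and every collider is in $Z$ or has a descendant in $Z$; $a,b$ are d-separated given $Z$ if no active path exists. Two graphs on the same vertex set are Markov equivalent if they have the same d-separation statements. *)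

From mathcomp Require Import all_boot.
Set Implicit Arguments. Unset Strict Implicit. Unset Printing Implicit Defensive.

Definition dcg (T : finType) (E : rel T) : Prop := irreflexive E.

Section DSep.
Variables (T : finType) (E : rel T).

(* A path is a start vertex together with a list of steps (d, y):
   d = true  : the path edge is  x -> y  (x the previous vertex)
   d = false : the path edge is  y -> x. *)
Definition step_ok (x : T) (s : bool * T) : bool :=
  if s.1 then E x s.2 else E s.2 x.

Fixpoint walk (x : T) (p : seq (bool * T)) : bool :=
  match p with
  | [::] => true
  | s :: p' => step_ok x s && walk s.2 p'
  end.

Definition descendant (v x : T) : bool := connect E v x.

(* Condition at each internal vertex: the vertex s1.2 is entered by the
   edge of step s1 and left by the edge of step s2; it is a collider iff
   both edges point into it, i.e. s1.1 = true and s2.1 = false. *)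
Fixpoint internal_ok (Z : {set T}) (p : seq (bool * T)) : bool :=
  match p with
  | s1 :: ((s2 :: _) as p') =>
      (if s1.1 && ~~ s2.1
       then [exists z in Z, descendant s1.2 z]
       else s1.2 \notin Z) && internal_ok Z p'
  | _ => true
  end.

Definition active_path (Z : {set T}) (a b : T) (p : seq (bool * T)) : Prop :=
  [/\ walk a p, last a (map snd p) = b & internal_ok Z p].

Definition dsep (a b : T) (Z : {set T}) : Prop :=
  ~ exists p, active_path Z a b p.

End DSep.

Definition markov_equiv (T : finType) (E1 E2 : rel T) : Prop :=
  forall (a b : T) (Z : {set T}), a != b -> a \notin Z -> b \notin Z ->
    (dsep E1 a b Z <-> dsep E2 a b Z).

Definition reverse (T : finType) (E : rel T) (k : nat) (v : 'I_k -> T) : rel T :=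
  fun a b =>
    [|| [exists i : 'I_k, (a == v (ordS i)) && (b == v i)],
        E a b && (b \notin [seq v i | i : 'I_k])
      | [exists i : 'I_k, [&& E a (v i), a != v (ord_pred i) & b == v (ord_pred i)]]].

From mathcomp Require Import all_boot.
Set Implicit Arguments. Unset Strict Implicit. Unset Printing Implicit Defensive.

(* Write H for Reverse(G, C), pv/nx for the predecessor/successor on C.
   Adding edges preserves active paths, and reversing the reversed cycle of H
   (whose successor map is pv) yields a subgraph of G, so it suffices to turn
   every G-active path into an H-active path, for an arbitrary graph and cycle.
   The path is rebuilt step by step: an edge x -> y into a cycle vertex y
   becomes x -> pv y in H, followed by a detour along the reversed cycle to y.
   Two cases decide how the detour is made active: either the cycle vertices
   have a descendant in Z in H (they are all strongly connected in H, so then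
   all of them do, and detours may use colliders on the cycle), or none has,
   and then the reversed cycle can be run through in either direction by
   non-colliders outside Z. *)

Section ActivePaths.
Variable T : finType.
Implicit Types (R : rel T) (Z : {set T}).

Definition has_desc_in R Z (x : T) : bool := [exists z in Z, descendant R x z].

Definition junction_ok R Z (x : T) (din dout : bool) : bool :=
  if din && ~~ dout then has_desc_in R Z x else x \notin Z.

Lemma walk_rcons R x q s :
  walk R x (rcons q s) = walk R x q && step_ok R (last x (map snd q)) s.
Proof. by elim: q x => [|u q IH] x /=; rewrite ?andbT // IH andbA. Qed.

Lemma internal_ok_cons2 R Z s1 s2 p :
  internal_ok R Z [:: s1, s2 & p] =
  junction_ok R Z s1.2 s1.1 s2.1 && internal_ok R Z (s2 :: p).
Proof. by []. Qed.

Lemma internal_ok_rcons2 R Z p s t :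
  internal_ok R Z (rcons (rcons p s) t) =
  internal_ok R Z (rcons p s) && junction_ok R Z s.2 s.1 t.1.
Proof.
elim: p => [|u p IH]; first by rewrite /= /junction_ok andbT.
have [w [q Ew]] : exists w q, rcons p s = w :: q.
  by case: p {IH} => [|x p]; [exists s, [::] | exists x, (rcons p s)].
rewrite rcons_cons Ew !rcons_cons in IH *.
by rewrite !internal_ok_cons2 IH andbA.
Qed.

Lemma has_desc_in_sub R1 R2 Z x :
  subrel R1 R2 -> has_desc_in R1 Z x -> has_desc_in R2 Z x.
Proof.
move=> sub /exists_inP [z Zz xz]; apply/exists_inP; exists z => //.
by apply: connect_sub xz => u w /sub; apply: connect1.
Qed.

Lemma active_path_sub R1 R2 Z a b p :
  subrel R1 R2 -> active_path R1 Z a b p -> active_path R2 Z a b p.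
Proof.
move=> sub [wp lp ip]; split => //.
  elim: p a wp {lp ip} => [|[[] y] p IH] x //= /andP [st wp];
  by rewrite IH // andbT; apply: sub.
elim: p ip {wp lp} => [|s [|t p] IH] //.
rewrite !internal_ok_cons2 => /andP [ok ip]; rewrite IH // andbT.
by move: ok; rewrite /junction_ok; case: ifP => // _; apply: has_desc_in_sub.
Qed.

Lemma dsep_sub R1 R2 (a b : T) Z : subrel R1 R2 -> dsep R2 a b Z -> dsep R1 a b Z.
Proof. by move=> sub nact [p act]; apply: nact; exists p; apply: active_path_sub act. Qed.

End ActivePaths.

Section ReverseCycle.
Variables (T : finType) (E : rel T) (C : pred T) (nx pv : T -> T).
Hypothesis nx_in : forall x, C x -> C (nx x).
Hypothesis pv_in : forall x, C x -> C (pv x).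
Hypothesis pvK : forall x, C x -> nx (pv x) = x.
Hypothesis cycle_iter_pv : forall x y, C x -> C y -> exists n, y = iter n pv x.

Definition rev_cycle : rel T := fun a b =>
  [|| C b && (a == nx b), E a b && ~~ C b | [&& C b, E a (nx b) & a != b]].

Lemma rev_cycle_pv x : C x -> rev_cycle x (pv x).
Proof. by move=> Cx; rewrite /rev_cycle pv_in //= pvK // eqxx. Qed.

Lemma rev_cycle_nx x : C x -> rev_cycle (nx x) x.
Proof. by move=> Cx; rewrite /rev_cycle Cx eqxx. Qed.

Lemma rev_cycle_out x y : E x y -> ~~ C y -> rev_cycle x y.
Proof. by move=> Exy Cy; rewrite /rev_cycle Exy Cy orbT. Qed.

Lemma rev_cycle_shift x y : C y -> E x y -> x != pv y -> rev_cycle x (pv y).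
Proof. by move=> Cy Exy ne; rewrite /rev_cycle pv_in // pvK // Exy ne !orbT. Qed.

Lemma iter_pv_in n x : C x -> C (iter n pv x).
Proof. by move=> Cx; elim: n => //= n IH; apply: pv_in. Qed.

Lemma iter_nx_in n x : C x -> C (iter n nx x).
Proof. by move=> Cx; elim: n => //= n IH; apply: nx_in. Qed.

Lemma iter_pvK n x : C x -> iter n nx (iter n pv x) = x.
Proof.
move=> Cx; elim: n => // n IH.
by rewrite [iter n.+1 nx _]iterSr iterS pvK ?IH // iter_pv_in.
Qed.

Lemma cycle_iter_nx x y : C x -> C y -> exists n, y = iter n nx x.
Proof. by move=> Cx Cy; have [n ->] := cycle_iter_pv Cy Cx; exists n; rewrite iter_pvK. Qed.

Lemma connect_rev_cycle_in x y : C x -> C y -> connect rev_cycle x y.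
Proof.
move=> Cx Cy; have [n ->] := cycle_iter_pv Cx Cy.
elim: n => [|n IH] /=; first exact: connect0.
by apply: connect_trans IH (connect1 _); apply/rev_cycle_pv/iter_pv_in.
Qed.

Lemma has_desc_in_rev_cycle Z x : has_desc_in E Z x -> has_desc_in rev_cycle Z x.
Proof.
case/exists_inP=> z Zz /connectP [p pth Ez]; subst z.
elim: p x pth Zz => [|y p IH] x /=.
  by move=> _ Zx; apply/exists_inP; exists x => //; apply: connect0.
case/andP => Exy pth Zl; case/exists_inP: (IH y pth Zl) => z Zz yz.
apply/exists_inP; exists z => //; rewrite /descendant.
have [Cy|nCy] := boolP (C y); last first.
  exact: connect_trans (connect1 (rev_cycle_out Exy nCy)) yz.
have pvyz := connect_trans (connect_rev_cycle_in (pv_in Cy) Cy) yz.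
have [->//|ne] := eqVneq x (pv y).
exact: connect_trans (connect1 (rev_cycle_shift Cy Exy ne)) pvyz.
Qed.

Lemma junction_ok_rev_cycle Z x din dout :
  junction_ok E Z x din dout -> junction_ok rev_cycle Z x din dout.
Proof. by rewrite /junction_ok; case: ifP => // _; apply: has_desc_in_rev_cycle. Qed.

Section Simulation.
Variables (Z : {set T}) (a : T).

(* An H-walk from a, active except possibly at its end, reaches y by a last
   step of direction d. *)
Definition arrives (y : T) (d : bool) : Prop := exists q,
  walk rev_cycle a (rcons q (d, y)) /\ internal_ok rev_cycle Z (rcons q (d, y)).

Definition departs (x : T) (d : bool) : Prop :=
  x = a \/ exists din, arrives x din /\ junction_ok rev_cycle Z x din d.

Definition reached (y : T) : Prop := y = a \/ exists d, arrives y d.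

Lemma departs_step x d y : departs x d -> step_ok rev_cycle x (d, y) -> arrives y d.
Proof.
case=> [->|[din [[q [wq iq]] ok]]] st; first by exists [::]; rewrite /= st.
exists (rcons q (din, x)); rewrite walk_rcons internal_ok_rcons2 wq iq ok.
by rewrite map_rcons last_rcons st.
Qed.

Lemma arrives_departs x din d :
  arrives x din -> junction_ok rev_cycle Z x din d -> departs x d.
Proof. by move=> r ok; right; exists din. Qed.

Lemma departs_start d : departs a d.
Proof. by left. Qed.

Lemma departs_reached y d : departs y d -> reached y.
Proof. by case=> [->|[din [r _]]]; [left | right; exists din]. Qed.

(* [sim x d] means that a G-step out of x of direction d can be reproduced in H;
   [sim_after sim y d] is what is needed after a G-step arriving at y. *)
Definition sim_after (sim : T -> bool -> Prop) (y : T) (d : bool) : Prop :=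
  (forall dout, junction_ok E Z y d dout -> sim y dout) /\ reached y.

Lemma sim_after_out (sim : T -> bool -> Prop) y d :
  (forall dout, departs y dout -> sim y dout) -> arrives y d -> sim_after sim y d.
Proof.
move=> hsim r; split; last by right; exists d.
by move=> dout /junction_ok_rev_cycle ok; apply/hsim/(arrives_departs r).
Qed.

Lemma active_rev_cycle_of_sim (sim : T -> bool -> Prop) b :
  (forall d, sim a d) ->
  (forall x d y, sim x d -> step_ok E x (d, y) -> sim_after sim y d) ->
  a != b -> (exists p, active_path E Z a b p) ->
  exists p, active_path rev_cycle Z a b p.
Proof.
move=> sim_a sim_step ab [p [wp lp ip]].
have reached_last q x d : sim_after sim x d -> walk E x q ->
    internal_ok E Z ((d, x) :: q) -> reached (last x (map snd q)).
  elim: q x d => [|[d' y] q IH] x d [hx rx] //= /andP [st wq] /andP [ok iq].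
  by apply: (IH y d') => //; apply: (sim_step x d' y) => //; apply: hx.
case: p wp lp ip => [|[d x] p] /=; first by move=> _ ba; rewrite ba eqxx in ab.
move=> /andP [st wp] lp ip.
have := reached_last p x d (sim_step a d x (sim_a d) st) wp ip; rewrite lp.
case=> [ba|[db [q [wq iq]]]]; first by rewrite ba eqxx in ab.
by exists (rcons q (db, b)); split => //; rewrite map_rcons last_rcons.
Qed.

Section CycleHasDescendant.
Hypothesis desc_in : forall c, C c -> has_desc_in rev_cycle Z c.

(* A step out of a cycle vertex x is rerouted through pv x or through the
   predecessor of the target, turning around at a collider of the cycle. *)
Definition sim_desc (x : T) (d : bool) : Prop :=
  if C x then
    (if d then departs x true /\ departs x false
     else departs x true \/ departs (pv x) false)
  else departs x d.

Lemma departs_collider c : C c -> arrives c true -> departs c false.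
Proof. by move=> Cc r; apply: arrives_departs r _; rewrite /junction_ok /= desc_in. Qed.

Lemma departs_both c din :
  C c -> arrives c din -> c \notin Z -> departs c true /\ departs c false.
Proof.
by move=> Cc r cZ; split; apply: arrives_departs r _; rewrite /junction_ok;
  case: din => //=; apply: desc_in.
Qed.

Lemma departs_pv_back x :
  C x -> departs x true \/ departs (pv x) false -> departs (pv x) false.
Proof.
by move=> Cx [c|//]; apply/departs_collider/(departs_step c)/rev_cycle_pv; rewrite ?pv_in.
Qed.

Lemma sim_desc_after_pv y d : C y -> departs (pv y) false -> sim_after sim_desc y d.
Proof.
move=> Cy c; have r : arrives y false by apply: departs_step c (rev_cycle_pv Cy).
split; last by right; exists false.
move=> [] ok; rewrite /sim_desc Cy; last by right.
by apply: departs_both r _; move: ok; rewrite /junction_ok andbF.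
Qed.

Lemma sim_desc_after_back y : C y -> reached y -> sim_after sim_desc y false.
Proof.
move=> Cy ry; split => // dout ok.
have yZ : y \notin Z by move: ok; rewrite /junction_ok.
have [c1 c2] : departs y true /\ departs y false.
  by case: ry => [->|[d r]]; [split; apply: departs_start | apply: departs_both r yZ].
by rewrite /sim_desc Cy; case: dout {ok} => //; left.
Qed.

Lemma sim_desc_step x d y : sim_desc x d -> step_ok E x (d, y) -> sim_after sim_desc y d.
Proof.
rewrite {1}/sim_desc /=.
have off_cycle z din : ~~ C z -> arrives z din -> sim_after sim_desc z din.
  by move=> nCz r; apply: sim_after_out r => dout; rewrite /sim_desc (negbTE nCz).
case: (boolP (C x)) => [Cx|nCx]; case: (boolP (C y)) => [Cy|nCy]; case: d => hs st.
- case: hs => c1 c2; apply: sim_desc_after_pv => //.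
  have [<-//|ne] := eqVneq x (pv y).
  by apply/departs_collider/(departs_step c1)/rev_cycle_shift; rewrite ?pv_in.
- have c := departs_pv_back Cx hs; apply: sim_desc_after_back => //.
  have [->|ne] := eqVneq y (pv x); first exact: departs_reached c.
  by right; exists false; apply: departs_step c (rev_cycle_shift Cx st ne).
- by case: hs => c1 _; apply: (off_cycle _ _ nCy); apply: departs_step c1 (rev_cycle_out st nCy).
- apply: (off_cycle _ _ nCy).
  apply: departs_step (departs_pv_back Cx hs) (rev_cycle_shift Cx st _).
  by apply: contraNneq nCy => /= ->; apply: pv_in.
- apply: sim_desc_after_pv => //; apply/departs_collider/(departs_step hs)/rev_cycle_shift;
    rewrite ?pv_in //.
  by apply: contraNneq nCx => /= ->; apply: pv_in.
- by apply: sim_desc_after_back => //; right; exists false;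
    apply: departs_step hs (rev_cycle_out st nCx).
- by apply: (off_cycle _ _ nCy); apply: departs_step hs (rev_cycle_out st nCy).
- by apply: (off_cycle _ _ nCy); apply: departs_step hs (rev_cycle_out st nCx).
Qed.

Lemma sim_desc_start d : sim_desc a d.
Proof.
by rewrite /sim_desc /departs; case: (C a); case: d; [split; left | left; left | left..].
Qed.

End CycleHasDescendant.

Section CycleWithoutDescendant.
Hypothesis no_desc : forall c, C c -> ~~ has_desc_in rev_cycle Z c.

Lemma cycle_notin c : C c -> c \notin Z.
Proof.
move=> Cc; apply: contraNN (no_desc Cc) => cZ.
by apply/exists_inP; exists c => //; apply: connect0.
Qed.

Definition arrives_all (d : bool) : Prop := forall c, C c -> arrives c d.

(* Here a step out of a cycle vertex is reproduced after running around the
   reversed cycle, which in this case passes only non-colliders outside Z. *)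
Definition sim_nodesc (x : T) (d : bool) : Prop :=
  if C x then arrives_all d else departs x d.

Lemma departs_cycle c din d : C c -> arrives c din -> din ==> d -> departs c d.
Proof.
move=> Cc r imp; apply: arrives_departs r _; rewrite /junction_ok.
by case: din d imp => [] [] //= _; apply: cycle_notin.
Qed.

Lemma arrives_all_fwd c : C c -> arrives c true -> arrives_all true.
Proof.
move=> Cc r e Ce; have [n ->] := cycle_iter_pv Cc Ce; elim: n => //= n IH.
have Cn := iter_pv_in n Cc.
exact: departs_step (departs_cycle Cn IH isT) (rev_cycle_pv Cn).
Qed.

Lemma arrives_all_bwd c : C c -> arrives c false -> arrives_all false.
Proof.
move=> Cc r e Ce; have [n ->] := cycle_iter_nx Cc Ce; elim: n => //= n IH.
have Cn := iter_nx_in n Cc.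
exact: departs_step (departs_cycle (d := false) Cn IH isT) (rev_cycle_nx Cn).
Qed.

Lemma arrives_all_fwd_of_bwd c : C c -> arrives c false -> arrives_all true.
Proof.
move=> Cc r; apply: arrives_all_fwd (pv_in Cc) _.
exact: departs_step (departs_cycle (d := true) Cc r isT) (rev_cycle_pv Cc).
Qed.

Lemma sim_nodesc_after_bwd y d : C y -> arrives y false -> sim_after sim_nodesc y d.
Proof.
move=> Cy r; split; last by right; exists false.
move=> [] _; rewrite /sim_nodesc Cy;
  [exact: arrives_all_fwd_of_bwd r | exact: arrives_all_bwd r].
Qed.

Lemma sim_nodesc_after_fwd y : C y -> arrives_all true -> sim_after sim_nodesc y true.
Proof.
move=> Cy all; split; last by right; exists true; apply: all.
move=> [] ok; rewrite /sim_nodesc Cy //.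
move: ok; rewrite /junction_ok /= => /has_desc_in_rev_cycle.
by rewrite (negbTE (no_desc Cy)).
Qed.

Lemma sim_nodesc_step x d y :
  sim_nodesc x d -> step_ok E x (d, y) -> sim_after sim_nodesc y d.
Proof.
rewrite {1}/sim_nodesc /=.
have off_cycle z din : ~~ C z -> arrives z din -> sim_after sim_nodesc z din.
  by move=> nCz r; apply: sim_after_out r => dout; rewrite /sim_nodesc (negbTE nCz).
have departs_all c din d' : C c -> arrives_all din -> din ==> d' -> departs c d'.
  by move=> Cc all; apply: departs_cycle Cc (all c Cc).
case: (boolP (C x)) => [Cx|nCx]; case: (boolP (C y)) => [Cy|nCy]; case: d => hs st.
- exact: sim_nodesc_after_fwd.
- exact: sim_nodesc_after_bwd (hs y Cy).
- apply: (off_cycle _ _ nCy).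
  exact: departs_step (departs_all x _ _ Cx hs isT) (rev_cycle_out st nCy).
- apply: (off_cycle _ _ nCy); apply: departs_step (departs_all _ _ false (pv_in Cx) hs isT) _.
  by apply: (rev_cycle_shift Cx st); apply: contraNneq nCy => /= ->; apply: pv_in.
- apply: sim_nodesc_after_fwd => //; apply: arrives_all_fwd (pv_in Cy) _.
  apply: (departs_step hs (rev_cycle_shift Cy st _)).
  by apply: contraNneq nCx => /= ->; apply: pv_in.
- by apply: sim_nodesc_after_bwd => //; apply: departs_step hs (rev_cycle_out st nCx).
- by apply: (off_cycle _ _ nCy); apply: departs_step hs (rev_cycle_out st nCy).
- by apply: (off_cycle _ _ nCy); apply: departs_step hs (rev_cycle_out st nCx).
Qed.

Lemma sim_nodesc_start d : sim_nodesc a d.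
Proof.
rewrite /sim_nodesc; case: (boolP (C a)) => [Ca|_]; last exact: departs_start.
case: d; [apply: (arrives_all_fwd (pv_in Ca)) | apply: (arrives_all_bwd (nx_in Ca))].
  exact: departs_step (departs_start true) (rev_cycle_pv Ca).
exact: departs_step (departs_start false) (rev_cycle_nx Ca).
Qed.

End CycleWithoutDescendant.

Lemma active_rev_cycle b :
  a != b -> (exists p, active_path E Z a b p) -> exists p, active_path rev_cycle Z a b p.
Proof.
have [/existsP [c /andP [Cc dc]]|nodesc] :=
  boolP [exists c, C c && has_desc_in rev_cycle Z c].
  have desc_in d : C d -> has_desc_in rev_cycle Z d.
    move=> Cd; case/exists_inP: dc => z Zz cz; apply/exists_inP; exists z => //.
    exact: connect_trans (connect_rev_cycle_in Cd Cc) cz.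
  exact: active_rev_cycle_of_sim sim_desc_start (sim_desc_step desc_in).
have no_desc c : C c -> ~~ has_desc_in rev_cycle Z c.
  by move=> Cc; apply: contraNN nodesc => dc; apply/existsP; exists c; rewrite Cc.
exact: active_rev_cycle_of_sim (sim_nodesc_start no_desc) (sim_nodesc_step no_desc).
Qed.

End Simulation.
End ReverseCycle.

Section ReverseCycleEquiv.
Variables (T : finType) (E : rel T) (C : pred T) (nx pv : T -> T).
Hypothesis nx_in : forall x, C x -> C (nx x).
Hypothesis pv_in : forall x, C x -> C (pv x).
Hypothesis nxK : forall x, C x -> pv (nx x) = x.
Hypothesis pvK : forall x, C x -> nx (pv x) = x.
Hypothesis edge_nx : forall x, C x -> E x (nx x).
Hypothesis cycle_iter_pv : forall x y, C x -> C y -> exists n, y = iter n pv x.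

(* The cycle of H runs along pv; reversing it gives back E up to self-loops. *)
Lemma rev_cycle_twice_sub : subrel (rev_cycle (rev_cycle E C nx) C pv) E.
Proof.
move=> x y; rewrite /rev_cycle; have [Cy|nCy] := boolP (C y); rewrite /=.
  case/or3P => [/eqP -> | /andP [_ //] | /andP [h ne]].
    by have := edge_nx (pv_in Cy); rewrite pvK.
  rewrite pv_in // pvK // in h.
  case/or3P: h => [/andP [_ /eqP e] | /andP [_ /negP //] | /and3P [_ ? _] //].
  by rewrite e eqxx in ne.
by rewrite !andbT !orbF.
Qed.

Lemma rev_cycle_markov_equiv : markov_equiv E (rev_cycle E C nx).
Proof.
move=> a b Z ab _ _; split=> [sepE actH | sepH actE].
  apply: (dsep_sub rev_cycle_twice_sub sepE).
  have cycle_iter_nx_pv := cycle_iter_nx pv_in pvK cycle_iter_pv.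
  exact: (active_rev_cycle pv_in nx_in nxK cycle_iter_nx_pv ab actH).
exact: sepH (active_rev_cycle nx_in pv_in pvK cycle_iter_pv ab actE).
Qed.

End ReverseCycleEquiv.

Section OrdinalCycle.
Variables (T : finType) (E : rel T) (k : nat) (v : 'I_k -> T).
Hypothesis v_inj : injective v.

Definition on_cycle : pred T := fun x => x \in [seq v i | i : 'I_k].

(* Off the cycle both maps are the identity; only their values on it matter. *)
Definition cycle_succ (x : T) : T :=
  if [pick i | v i == x] is Some i then v (ordS i) else x.
Definition cycle_pred (x : T) : T :=
  if [pick i | v i == x] is Some i then v (ord_pred i) else x.

Lemma on_cycle_v i : on_cycle (v i).
Proof. exact: image_f. Qed.

Lemma on_cycleP x : on_cycle x -> exists i, x = v i.
Proof. by case/imageP => i _ ->; exists i. Qed.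

Lemma cycle_succ_v i : cycle_succ (v i) = v (ordS i).
Proof. by rewrite /cycle_succ; case: pickP => [j /eqP /v_inj -> //|/(_ i)]; rewrite eqxx. Qed.

Lemma cycle_pred_v i : cycle_pred (v i) = v (ord_pred i).
Proof. by rewrite /cycle_pred; case: pickP => [j /eqP /v_inj -> //|/(_ i)]; rewrite eqxx. Qed.

Lemma cycle_succ_in x : on_cycle x -> on_cycle (cycle_succ x).
Proof. by case/on_cycleP => i ->; rewrite cycle_succ_v on_cycle_v. Qed.

Lemma cycle_pred_in x : on_cycle x -> on_cycle (cycle_pred x).
Proof. by case/on_cycleP => i ->; rewrite cycle_pred_v on_cycle_v. Qed.

Lemma cycle_succK x : on_cycle x -> cycle_pred (cycle_succ x) = x.
Proof. by case/on_cycleP => i ->; rewrite cycle_succ_v cycle_pred_v ordSK. Qed.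

Lemma cycle_predK x : on_cycle x -> cycle_succ (cycle_pred x) = x.
Proof. by case/on_cycleP => i ->; rewrite cycle_pred_v cycle_succ_v ord_predK. Qed.

Lemma cycle_edge : (forall i, E (v i) (v (ordS i))) ->
  forall x, on_cycle x -> E x (cycle_succ x).
Proof. by move=> Ev x /on_cycleP [i ->]; rewrite cycle_succ_v. Qed.

Lemma val_iter_ordS n (i : 'I_k) : val (iter n (@ordS k) i) = (i + n) %% k.
Proof.
elim: n => [|n IH] /=; first by rewrite addn0 modn_small.
by rewrite IH -addn1 modnDml addn1 addnS.
Qed.

Lemma iter_ordSK n (i : 'I_k) : iter n (@ord_pred k) (iter n (@ordS k) i) = i.
Proof. by elim: n => // n IH; rewrite [iter n.+1 (@ord_pred k) _]iterSr iterS ordSK. Qed.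

Lemma iter_cycle_pred n i : iter n cycle_pred (v i) = v (iter n (@ord_pred k) i).
Proof. by elim: n => //= n ->; rewrite cycle_pred_v. Qed.

Lemma cycle_iter_pred x y : on_cycle x -> on_cycle y -> exists n, y = iter n cycle_pred x.
Proof.
case/on_cycleP => i ->; case/on_cycleP => j ->.
have [n <-] : exists n, iter n (@ordS k) j = i.
  exists (k - j + i); apply: val_inj; rewrite val_iter_ordS.
  by rewrite addnA subnKC ?(ltnW (ltn_ord j)) // modnDl modn_small.
by exists n; rewrite iter_cycle_pred iter_ordSK.
Qed.

Lemma reverseE : reverse E v =2 rev_cycle E on_cycle cycle_succ.
Proof.
move=> x y; rewrite /reverse /rev_cycle.
have [/on_cycleP [i ->] | nCy] := boolP (on_cycle y).
  rewrite /= cycle_succ_v.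
  have -> : [exists j, (x == v (ordS j)) && (v i == v j)] = (x == v (ordS i)).
    apply/existsP/idP => [[j /andP [e /eqP /v_inj ->]] //| e].
    by exists i; rewrite e eqxx.
  have -> : v i \notin [seq v j | j : 'I_k] = false by apply/negbF/on_cycle_v.
  rewrite /= !andbF /=; congr (_ || _).
  apply/existsP/idP => [[j /and3P [e ne /eqP ej]] | /andP [e ne]].
    by move: (v_inj ej) e ne => ->; rewrite ord_predK => -> ->.
  by exists (ordS i); rewrite ordSK e ne eqxx.
have notv j : (y == v j) = false by apply: contraNF nCy => /eqP ->; apply: on_cycle_v.
have -> : y \notin [seq v j | j : 'I_k] by [].
rewrite andbT /=.
have -> : [exists j, (x == v (ordS j)) && (y == v j)] = false.
  by apply/existsP => [[j]]; rewrite notv andbF.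
have -> : [exists j, [&& E x (v j), x != v (ord_pred j) & y == v (ord_pred j)]] = false.
  by apply/existsP => [[j]]; rewrite notv !andbF.
by rewrite orbF.
Qed.

End OrdinalCycle.

Lemma eq_markov_equiv (T : finType) (E1 E2 E2' : rel T) :
  E2' =2 E2 -> markov_equiv E1 E2 -> markov_equiv E1 E2'.
Proof.
move=> eqE2 equiv12 a b Z ab aZ bZ; apply: iff_trans (equiv12 a b Z ab aZ bZ) _.
by split; apply: dsep_sub => x y; rewrite eqE2.
Qed.

Theorem mainTheorem11 (T : finType) (E : rel T) (k : nat) (v : 'I_k -> T) :
  dcg E -> 1 < k -> injective v -> (forall i : 'I_k, E (v i) (v (ordS i))) ->
  markov_equiv E (reverse E v).
Proof.
move=> _ _ v_inj Ev.
apply: eq_markov_equiv (reverseE E v_inj) _.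
apply: rev_cycle_markov_equiv (cycle_succ_in v_inj) (cycle_pred_in v_inj)
  (cycle_succK v_inj) (cycle_predK v_inj) (cycle_edge v_inj Ev) (cycle_iter_pred v_inj).
Qed.
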